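(* Let $T,S\in\mathcal{B}_A(\mathcal{H})$. Then $$\omega_A(TS)\le \tfrac12\Big(\omega_A(ST)+\|T\|_A\|S\|_A\Big).$$
   Context: $\mathcal{H}$ is a complex Hilbert space with inner product $\langle\cdot,\cdot\rangle$, and $A$ is a fixed nonzero positive bounded operator on $\mathcal{H}$. Set $\langle x,y\rangle_A=\langle Ax,y\rangle$ and $\|x\|_A=\|A^{1/2}x\|$. $\mathcal{B}_A(\mathcal{H})$ is the set of bounded operators $T$ for which there exists a bounded $S$ with $\langle Tx,y\rangle_A=\langle x,Sy\rangle_A$ for all $x,y$. For an operator $T$ with $\|Tx\|_A\le\lambda\|x\|_A$ for some $\lambda>0$ and all $x$, $\|T\|_A=\sup\{\|Tx\|_A: \|x\|_A=1\}$, and $\omega_A(T)=\sup\{|\langle Tx,x\rangle_A|:\|x\|_A=1\}$. *)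

From mathcomp Require Import all_boot all_order all_algebra.
From mathcomp Require Import all_classical all_reals.
From mathcomp Require Export complex.
Set Implicit Arguments. Unset Strict Implicit. Unset Printing Implicit Defensive.
Import Order.TTheory GRing.Theory Num.Theory.
Local Open Scope ring_scope.
Local Open Scope classical_set_scope.

Section HilbertDefs.
Variable R : realType.
Local Notation C := (R[i]).
Variable V : lmodType C.
Variable ip : V -> V -> C.

Definition is_inner_product : Prop :=
  [/\ (forall (a : C) (x y z : V), ip (a *: x + y) z = a * ip x z + ip y z),
      (forall x y : V, ip y x = conjc (ip x y)),
      (forall x : V, 0 <= ip x x)
    & (forall x : V, ip x x = 0 -> x = 0)].

Definition hnorm (x : V) : R := Num.sqrt (complex.Re (ip x x)).

Definition is_complete : Prop :=
  forall u : nat -> V,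
    (forall e : R, 0 < e -> exists N : nat, forall m n : nat,
        (N <= m)%N -> (N <= n)%N -> hnorm (u m - u n) < e) ->
    exists l : V, forall e : R, 0 < e -> exists N : nat, forall n : nat,
        (N <= n)%N -> hnorm (u n - l) < e.

Definition is_hilbert : Prop := is_inner_product /\ is_complete.

Definition bounded_op (T : V -> V) : Prop :=
  (forall (a : C) (x y : V), T (a *: x + y) = a *: T x + T y) /\
  exists M : R, forall x : V, hnorm (T x) <= M * hnorm x.

Definition positive_op (A : V -> V) : Prop :=
  bounded_op A /\ forall x : V, 0 <= ip (A x) x.

Definition nonzero_op (A : V -> V) : Prop := exists x : V, A x <> 0.

Definition ipA (A : V -> V) (x y : V) : C := ip (A x) y.

(* ||x||_A = ||A^{1/2} x|| = sqrt <Ax,x> *)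
Definition normA (A : V -> V) (x : V) : R :=
  Num.sqrt (complex.Re (ipA A x x)).

Definition BA (A T : V -> V) : Prop :=
  bounded_op T /\
  exists S : V -> V, bounded_op S /\
    forall x y : V, ipA A (T x) y = ipA A x (S y).

Definition opnormA (A T : V -> V) : R :=
  sup [set normA A (T x) | x in [set x : V | normA A x = 1]].

Definition numradA (A T : V -> V) : R :=
  sup [set Normc.normc (ipA A (T x) x) | x in [set x : V | normA A x = 1]].

End HilbertDefs.

(* The argument works for an arbitrary positive semidefinite Hermitian form
   B = <A.,.>, writing |.| for its seminorm and U^# for a B-adjoint.

   A-adjointable operators are A-bounded: for P = T^# T and |x| = 1 the
   sequence |P^k x| is log-convex, so |P x|^k <= |P^k x|, which grows at most
   geometrically because T and T^# are bounded on the Hilbert space; hence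
   |T x|^2 = Re <P x, x> <= |P x| is bounded on the unit sphere.

   For the inequality, rotate by a unimodular c so that |<TSx,x>| becomes
   Re c<TSx,x>, put Z = cTS + (cTS)^#, so that <Zy,y> = 2 Re c<TSy,y>, and let
   lam be the supremum of Re c<TSy,y> over the unit sphere.  As 2 lam - Z is
   positive, |(2 lam - Z) y|^2 <= k (2 lam - <Zy,y>): near-maximisers y are
   near-eigenvectors, Zy ~ 2 lam y.  Pairing SZy with Sy and T^#Zy with T^#y,
   bounding <STSy,Sy> and <T^# S^# T^# y, T^# y> by w(ST), gives
   (2 lam - w(ST) - ab) N <= |(2 lam - Z) y| (a|Sy| + b|T^#y|) with
   a = ||T||, b = ||S||, N = (a/b)|Sy|^2 + (b/a)|T^#y|^2, which is only
   compatible with the maximality of lam if 2 lam <= w(ST) + ab. *)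

From HB Require Import structures.
From mathcomp Require Import all_boot all_order all_algebra.
From mathcomp Require Import all_classical all_reals.
From mathcomp Require Import complex.
From mathcomp Require Import ring lra.
Import Order.TTheory GRing.Theory Num.Theory.
Local Open Scope ring_scope.
Set Implicit Arguments. Unset Strict Implicit.

Local Notation Re := complex.Re.
Local Notation normc := Normc.normc.

Section RealInequalities.
Variable R : realFieldType.

Lemma discriminant_le (a b c : R) : 0 <= b -> 0 <= c ->
  (forall r, 0 <= a - 2 * b * r + b * c * r ^+ 2) -> b <= a * c.
Proof.
move=> b0 c0 hq; have [c00|cn0] := eqVneq c 0.
  rewrite c00 mulr0 leNgt; apply/negP => bp.
  have := hq ((a + 1) / (2 * b)); rewrite c00 mulr0 mul0r addr0.
  have -> : 2 * b * ((a + 1) / (2 * b)) = a + 1 by field; rewrite gt_eqF.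
  lra.
have cp : 0 < c by rewrite lt_neqAle eq_sym cn0.
have := hq c^-1; rewrite -(pmulr_rge0 _ cp).
have -> : c * (a - 2 * b * c^-1 + b * c * c^-1 ^+ 2) = a * c - b by field.
by rewrite subr_ge0.
Qed.

Lemma logconvex_expr_le (s : nat -> R) : (forall k, 0 <= s k) -> s 0%N = 1 ->
  (forall k, s k.+1 ^+ 2 <= s k * s k.+2) -> forall k, s 1%N ^+ k <= s k.
Proof.
move=> s_ge0 s0 s_cvx.
have step k : s 1%N * s k <= s k.+1.
  elim: k => [|k IH]; first by rewrite s0 mulr1.
  have [sk0|skn0] := eqVneq (s k) 0.
    have := s_cvx k; rewrite sk0 mul0r => h.
    suff -> : s k.+1 = 0 by rewrite mulr0.
    by apply/eqP; rewrite -sqrf_eq0 eq_le h sqr_ge0.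
  have skp : 0 < s k by rewrite lt_neqAle eq_sym skn0 s_ge0.
  rewrite -(ler_pM2l skp); apply: le_trans (s_cvx k).
  by rewrite mulrA [s k * _]mulrC expr2 ler_wpM2r ?s_ge0.
elim=> [|k IH]; first by rewrite expr0 s0.
by rewrite exprS; apply: le_trans (step k); rewrite ler_wpM2l ?s_ge0.
Qed.

Lemma mul2_le_weighted (a b p q : R) : 0 < a -> 0 < b ->
  2 * (p * q) <= a / b * p ^+ 2 + b / a * q ^+ 2.
Proof.
move=> a_gt0 b_gt0; rewrite -subr_ge0.
have -> : a / b * p ^+ 2 + b / a * q ^+ 2 - 2 * (p * q) = (a * p - b * q) ^+ 2 / (a * b).
  by field; rewrite !gt_eqF.
by rewrite divr_ge0 ?sqr_ge0 ?mulr_ge0 ?ltW.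
Qed.

Lemma sqr_le_weighted (a b p q : R) : 0 < a -> 0 < b ->
  (a * p + b * q) ^+ 2 <= 2 * (a * b) * (a / b * p ^+ 2 + b / a * q ^+ 2).
Proof.
move=> a_gt0 b_gt0; rewrite -subr_ge0.
have -> : 2 * (a * b) * (a / b * p ^+ 2 + b / a * q ^+ 2) - (a * p + b * q) ^+ 2
    = (a * p - b * q) ^+ 2 by field; rewrite !gt_eqF.
exact: sqr_ge0.
Qed.

Lemma sqr_mul_le_of_le_mul (g n t x e : R) : 0 <= g -> 0 <= n -> 0 <= t -> 0 <= e ->
  g * n <= t * x -> x ^+ 2 <= e * n -> g ^+ 2 * n <= e * t ^+ 2.
Proof.
move=> g0 n0 t0 e0 gn_le x2_le; have [->|nn0] := eqVneq n 0.
  by rewrite mulr0 mulr_ge0 ?sqr_ge0.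
have np : 0 < n by rewrite lt_neqAle eq_sym nn0.
rewrite -(ler_pM2r np); apply: le_trans (_ : (t * x) ^+ 2 <= _).
  have gn0 : 0 <= g * n by rewrite mulr_ge0.
  have tx0 : 0 <= t * x by apply: le_trans gn_le.
  by rewrite -mulrA -expr2 -exprMn ler_pXn2r ?nnegrE.
have -> : e * t ^+ 2 * n = t ^+ 2 * (e * n) by ring.
by rewrite exprMn ler_wpM2l ?sqr_ge0.
Qed.

End RealInequalities.

Lemma le_of_expr_bounded (R : archiFieldType) (q m c : R) : 0 <= q -> 0 <= m ->
  (forall k, q ^+ k <= c * m ^+ k) -> q <= m.
Proof.
move=> q0 m0 hk; rewrite leNgt; apply/negP => mq.
have mp : 0 < m.
  rewrite lt_neqAle m0 andbT eq_sym; apply/negP => /eqP m00.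
  by move: (hk 1%N); rewrite !expr1 m00 mulr0; lra.
set r := q / m.
have r1 : 1 < r by rewrite /r ltr_pdivlMr // mul1r.
have rc k : r ^+ k <= c.
  by rewrite /r exprMn exprVn ler_pdivrMr ?exprn_gt0.
have bernoulli k : 1 + k%:R * (r - 1) <= r ^+ k.
  elim: k => [|k IH]; first by rewrite mul0r addr0 expr0.
  rewrite exprS; apply: le_trans (ler_wpM2l (ltW (lt_trans ltr01 r1)) IH).
  rewrite -natr1; have := mulr_ge0 (ler0n R k) (sqr_ge0 (r - 1)); nra.
have c0 : 0 <= c by apply: le_trans (rc 0%N); rewrite expr0.
have rp : 0 < r - 1 by rewrite subr_gt0.
have := archi_boundP (divr_ge0 c0 (ltW rp)); set n := Num.Def.archi_bound _.
rewrite ltr_pdivrMr // => hn.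
have := le_trans (bernoulli n) (rc n); lra.
Qed.

Lemma iter_le_expr (X : Type) (R : numDomainType) (nrm : X -> R) (f : X -> X) (m : R) :
  0 <= m -> (forall x, nrm (f x) <= m * nrm x) ->
  forall k x, nrm (iter k f x) <= m ^+ k * nrm x.
Proof.
move=> m_ge0 f_le; elim=> [|k IH] x; first by rewrite expr0 mul1r.
rewrite iterS exprS -mulrA; apply: le_trans (f_le _) _.
by apply: (ler_wpM2l m_ge0); exact: IH.
Qed.

Section ComplexFacts.
Variable R : rcfType.
Implicit Types (r : R) (w : R[i]).

Lemma normc_ge0 w : 0 <= normc w.
Proof. by case: w => a b; exact: sqrtr_ge0. Qed.

Lemma norm_normc w : `|w| = (normc w)%:C%C.
Proof. by case: w => a b; rewrite normc_def. Qed.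

Lemma normc_conj w : normc (conjc w) = normc w.
Proof. by case: w => a b /=; rewrite sqrrN. Qed.

Lemma normc_real r : normc r%:C%C = `|r|.
Proof. by rewrite /= expr0n /= addr0 sqrtr_sqr. Qed.

Lemma norm_Re_le_normc w : `|Re w| <= normc w.
Proof. by case: w => a b; have := normc_ge_Re (a +i* b)%C; rewrite normc_def lecR. Qed.

Lemma Re_le_normc w : Re w <= normc w.
Proof. by apply: le_trans (norm_Re_le_normc w); exact: ler_norm. Qed.

Lemma conjcRM r w : conjc (r%:C%C * w) = r%:C%C * conjc w.
Proof. by case: w => a b; apply/eqP; rewrite eq_complex /= !mul0r !addr0 mulrN !eqxx. Qed.

Lemma ReRM r w : Re (r%:C%C * w) = r * Re w.
Proof. by case: w => u v /=; rewrite mul0r subr0. Qed.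

Lemma ReD w1 w2 : Re (w1 + w2) = Re w1 + Re w2.
Proof. by case: w1; case: w2. Qed.

Lemma ReB w1 w2 : Re (w1 - w2) = Re w1 - Re w2.
Proof. by case: w1; case: w2. Qed.

Lemma phase_exists w : exists2 c, normc c = 1 & c * w = (normc w)%:C%C.
Proof.
have [->|wn0] := eqVneq w 0.
  by exists 1; rewrite ?mulr0 ?Normc.normc1 ?Normc.normc0.
have wp : 0 < normc w.
  rewrite lt_neqAle normc_ge0 andbT eq_sym.
  by apply: contra wn0 => /eqP/Normc.eq0_normc ->.
exists (conjc w * (normc w)^-1%:C%C).
  by rewrite Normc.normcM normc_conj normc_real gtr0_norm ?invr_gt0 // mulfV ?gt_eqF.
rewrite mulrAC [conjc w * w]mulrC -sqr_normc.
by rewrite norm_normc -rmorphXn -rmorphM /= expr2 -mulrA mulfV ?gt_eqF ?mulr1.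
Qed.

End ComplexFacts.

Section SemiInnerProduct.
Variables (R : rcfType) (V : lmodType R[i]).

Definition is_semi_inner_product (B : V -> V -> R[i]) : Prop :=
  [/\ (forall (a : R[i]) (x y z : V), B (a *: x + y) z = a * B x z + B y z),
      (forall x y : V, B y x = conjc (B x y))
    & (forall x : V, 0 <= B x x)].

Definition snorm (B : V -> V -> R[i]) (x : V) : R := Num.sqrt (Re (B x x)).

Variable B : V -> V -> R[i].
Hypothesis hB : is_semi_inner_product B.
Local Notation "`[ x ]" := (snorm B x) (format "`[ x ]").

Let sipDZl a x y z : B (a *: x + y) z = a * B x z + B y z.
Proof. by case: hB. Qed.
Lemma sipC x y : B y x = conjc (B x y). Proof. by case: hB. Qed.
Let sip_ge0 x : 0 <= B x x. Proof. by case: hB. Qed.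

Lemma sip0l z : B 0 z = 0.
Proof.
have := sipDZl 1 0 0 z; rewrite scaler0 addr0 mul1r => h.
by apply: (addrI (B 0 z)); rewrite addr0 -h.
Qed.
Lemma sipDl x y z : B (x + y) z = B x z + B y z.
Proof. by rewrite -[x]scale1r sipDZl mul1r scale1r. Qed.
Lemma sipZl a x z : B (a *: x) z = a * B x z.
Proof. by rewrite -[a *: x]addr0 sipDZl sip0l addr0. Qed.
Lemma sipBl x y z : B (x - y) z = B x z - B y z.
Proof. by rewrite sipDl -scaleN1r sipZl mulN1r. Qed.
Lemma sipDr x y z : B z (x + y) = B z x + B z y.
Proof. by rewrite sipC sipDl rmorphD /= -!sipC. Qed.
Lemma sipZr a x z : B z (a *: x) = conjc a * B z x.
Proof. by rewrite sipC sipZl rmorphM /= -sipC. Qed.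
Lemma sipBr x y z : B z (x - y) = B z x - B z y.
Proof. by rewrite sipC sipBl rmorphB /= -!sipC. Qed.

Lemma Re_sip_ge0 x : 0 <= Re (B x x).
Proof. by have := sip_ge0 x; rewrite lecE => /andP[]. Qed.

Lemma snorm_ge0 x : 0 <= `[x]. Proof. exact: sqrtr_ge0. Qed.

Lemma sqr_snorm x : `[x] ^+ 2 = Re (B x x).
Proof. by rewrite sqr_sqrtr // Re_sip_ge0. Qed.

Lemma sip_diag x : B x x = (`[x] ^+ 2)%:C%C.
Proof. by rewrite sqr_snorm; move: (ger0_Im (sip_ge0 x)); case: (B x x) => a b /= ->. Qed.

Lemma sip_scale2 (r : R) x y : B (r%:C%C *: x) (r%:C%C *: y) = (r ^+ 2)%:C%C * B x y.
Proof. by rewrite sipZl sipZr conjc_real mulrA -rmorphM expr2. Qed.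

Lemma snormZ (r : R) x : `[r%:C%C *: x] = `|r| * `[x].
Proof. by rewrite /snorm sip_scale2 ReRM sqrtrM ?sqr_ge0 // sqrtr_sqr. Qed.

Lemma CauchySchwarz_sip x y : normc (B x y) <= `[x] * `[y].
Proof.
set z := B x y; set m := normc z ^+ 2.
have zJz : z * conjc z = (normc z)%:C%C * (normc z)%:C%C.
  by rewrite -sqr_normc norm_normc expr2.
have quad r : 0 <= `[x] ^+ 2 - 2 * m * r + m * `[y] ^+ 2 * r ^+ 2.
  have := Re_sip_ge0 (x - (r%:C%C * z) *: y).
  suff -> : B (x - (r%:C%C * z) *: y) (x - (r%:C%C * z) *: y) =
      (`[x] ^+ 2 - 2 * m * r + m * `[y] ^+ 2 * r ^+ 2)%:C%C by [].
  rewrite sipBl !sipBr !sipZl !sipZr (sipC x y) -/z !sip_diag conjcRM.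
  by rewrite !(rmorphB, rmorphD, rmorphM) /= -zJz; ring.
have := discriminant_le (exprn_ge0 2 (normc_ge0 z)) (exprn_ge0 2 (snorm_ge0 y)) quad.
by rewrite -exprMn ler_pXn2r ?nnegrE ?normc_ge0 ?mulr_ge0 ?snorm_ge0.
Qed.

End SemiInnerProduct.

Section Adjoints.
Variables (R : rcfType) (V : lmodType R[i]) (B : V -> V -> R[i]).
Hypothesis hB : is_semi_inner_product B.
Local Notation "`[ x ]" := (snorm B x) (format "`[ x ]").

Definition is_adjoint (T T' : V -> V) : Prop := forall x y, B (T x) y = B x (T' y).

Lemma is_adjointC T T' : is_adjoint T T' -> is_adjoint T' T.
Proof. by move=> hT x y; rewrite (sipC hB y) -hT -sipC. Qed.

Lemma snorm_bound_abs (U : V -> V) (M : R) : (forall x, `[U x] <= M * `[x]) ->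
  forall x, `[U x] <= `|M| * `[x].
Proof.
move=> U_le x; apply: le_trans (U_le x) _.
by apply: ler_wpM2r; [exact: snorm_ge0 | exact: ler_norm].
Qed.

Lemma sqr_snorm_le_adjoint T T' x : is_adjoint T T' -> `[T x] ^+ 2 <= `[T' (T x)] * `[x].
Proof.
move=> hT; rewrite (sqr_snorm hB) hT (sipC hB (T' (T x))).
apply: le_trans (Re_le_normc _) _; rewrite normc_conj; exact: CauchySchwarz_sip.
Qed.

Lemma snorm_adjoint_le T T' (k : R) : is_adjoint T T' -> 0 <= k ->
  (forall u, `[T u] <= k * `[u]) -> forall u, `[T' u] <= k * `[u].
Proof.
move=> hT k0 hk u; have := sqr_snorm_le_adjoint u (is_adjointC hT).
move/le_trans/(_ (ler_wpM2r (snorm_ge0 B u) (hk (T' u)))).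
have := snorm_ge0 B (T' u); have := mulr_ge0 k0 (snorm_ge0 B u); nra.
Qed.

Lemma homogeneous_le (g : V -> R) (d : nat) (K : R) : (0 < d)%N ->
  (forall (r : R) u, 0 < r -> g (r%:C%C *: u) = r ^+ d * g u) ->
  (forall u, `[u] = 0 -> g u <= 0) -> (forall u, `[u] = 1 -> g u <= K) ->
  forall u, g u <= K * `[u] ^+ d.
Proof.
move=> d_gt0 g_hom g_null g_unit u; have [u0|un0] := eqVneq `[u] 0.
  by rewrite u0 expr0n gtn_eqF // mulr0; exact: g_null.
have up : 0 < `[u] by rewrite lt_neqAle eq_sym un0 snorm_ge0.
have rp : 0 < `[u]^-1 by rewrite invr_gt0.
have := g_unit (`[u]^-1%:C%C *: u); rewrite snormZ // gtr0_norm // mulVf // g_hom //.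
move=> /(_ erefl) h; rewrite -(ler_pM2l (exprn_gt0 d rp)); apply: le_trans h _.
by rewrite mulrCA -exprMn mulVf // expr1n mulr1.
Qed.

Lemma sqr_snorm_le_positive (K : V -> V) (k : R) : linear K -> is_adjoint K K ->
  (forall x, 0 <= B (K x) x) -> 0 <= k -> (forall x, Re (B (K x) x) <= k * `[x] ^+ 2) ->
  forall y, `[K y] ^+ 2 <= k * Re (B (K y) y).
Proof.
move=> Klin Ksym K_ge0 k0 K_le y; set F := fun u v => B (K u) v.
have hF : is_semi_inner_product F.
  split=> [a u v w|u v|//]; first by rewrite /F Klin sipDl // sipZl.
  by rewrite /F Ksym (sipC hB (K u)).
have sqrF u : snorm F u ^+ 2 = Re (B (K u) u) by rewrite sqr_snorm.
have CS := CauchySchwarz_sip hF y (K y).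
have t_le : `[K y] ^+ 2 <= snorm F y * snorm F (K y).
  by rewrite (sqr_snorm hB); exact: le_trans (Re_le_normc _) CS.
have qk := K_le (K y); rewrite -sqrF in qk; rewrite -sqrF.
have := snorm_ge0 B (K y); have := snorm_ge0 F y; have := snorm_ge0 F (K y).
move: t_le qk; move: (`[K y]) (snorm F y) (snorm F (K y)) => t p q tpq qkt q0 p0 t0.
have [->|tn0] := eqVneq t 0; first by rewrite expr0n mulr_ge0 ?sqr_ge0.
have t2p : 0 < t ^+ 2 by rewrite exprn_gt0 // lt_neqAle eq_sym tn0.
rewrite -(ler_pM2r t2p); apply: le_trans (ler_pM _ _ tpq tpq) _; rewrite ?sqr_ge0 //.
have -> : p * q * (p * q) = p ^+ 2 * q ^+ 2 by ring.
have -> : k * p ^+ 2 * t ^+ 2 = p ^+ 2 * (k * t ^+ 2) by ring.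
by rewrite ler_wpM2l ?sqr_ge0.
Qed.

End Adjoints.

Section OrbitGrowth.
Variables (R : realType) (V : lmodType R[i]) (B : V -> V -> R[i]).
Hypothesis hB : is_semi_inner_product B.
Local Notation "`[ x ]" := (snorm B x) (format "`[ x ]").
Variables (U U' : V -> V) (m : R).
Hypotheses (hU : linear U) (hUU' : is_adjoint B U U') (m_ge0 : 0 <= m).
HB.instance Definition _ := GRing.isLinear.Build R[i] V V *:%R U hU.

Local Notation P := (U' \o U).
Hypothesis orbit_growth : forall x, exists c, forall k, `[iter k P x] <= c * m ^+ k.

Let P_sym : is_adjoint B P P.
Proof. by move=> x y; rewrite /= (is_adjointC hB hUU') hUU'. Qed.

Let sqr_snorm_unit_le x : `[x] = 1 -> `[U x] ^+ 2 <= m.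
Proof.
move=> x1; pose s k := `[iter k P x].
have s_cvx k : s k.+1 ^+ 2 <= s k * s k.+2.
  rewrite /s (sqr_snorm hB) [iter k.+1 _ _]iterS P_sym -iterS -iterS.
  by apply: le_trans (Re_le_normc _) _; exact: CauchySchwarz_sip.
have s1_le : s 1%N <= m.
  have [c hc] := orbit_growth x.
  apply: (le_of_expr_bounded (c := c)) => // [|k]; first exact: snorm_ge0.
  apply: le_trans (hc k); apply: (logconvex_expr_le (s := s)) => // j.
  exact: snorm_ge0.
by apply: le_trans (sqr_snorm_le_adjoint hB x hUU') _; rewrite x1 mulr1.
Qed.

Lemma snorm_le_of_orbit_growth x : `[U x] <= Num.sqrt m * `[x].
Proof.
have sqr_le : `[U x] ^+ 2 <= m * `[x] ^+ 2.
  apply: (homogeneous_le hB (g := fun x => `[U x] ^+ 2)) => [//|r u rp|u u0|].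
  - by rewrite linearZ snormZ // gtr0_norm // exprMn.
  - by apply: le_trans (sqr_snorm_le_adjoint hB u hUU') _; rewrite u0 mulr0.
  - exact: sqr_snorm_unit_le.
by rewrite -(@ler_pXn2r _ 2) ?nnegrE ?mulr_ge0 ?sqrtr_ge0 ?snorm_ge0 // exprMn (sqr_sqrtr m_ge0).
Qed.

End OrbitGrowth.

Section SupImage.
Local Open Scope classical_set_scope.
Variables (R : realType) (T : Type) (U : set T) (f : T -> R).
Local Notation supf := (sup [set f y | y in U]).

Lemma le_sup_image M : (forall y, U y -> f y <= M) -> forall y, U y -> f y <= supf.
Proof.
move=> fM y Uy; apply: ub_le_sup; last by exists y.
by exists M => _ [z Uz <-]; exact: fM.
Qed.

Lemma sup_image_le K : 0 <= K -> (forall y, U y -> f y <= K) -> supf <= K.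
Proof.
move=> K0 fK; have [[y Uy]|U0] := pselect (exists y, U y).
  by apply: ge_sup; [exists (f y), y | move=> _ [z Uz <-]; exact: fK].
suff -> : U = set0 by rewrite image_set0 sup0.
by apply/seteqP; split=> // y Uy; case: U0; exists y.
Qed.

Lemma sup_image_ge0 : (forall y, U y -> 0 <= f y) -> 0 <= supf.
Proof.
move=> f0; have [[[_ [y Uy _]] fU]|/sup_out ->] := pselect (has_sup [set f y | y in U]).
  by apply: le_trans (f0 _ Uy) _; apply: (ub_le_sup fU); exists y.
by [].
Qed.
End SupImage.

Section ProductNumericalRadius.
Variables (R : realType) (V : lmodType R[i]) (B : V -> V -> R[i]).
Hypothesis hB : is_semi_inner_product B.
Local Notation "`[ x ]" := (snorm B x) (format "`[ x ]").

Variables (T T' S S' : V -> V).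
Hypotheses (T_lin : linear T) (T'_lin : linear T') (S_lin : linear S) (S'_lin : linear S').
HB.instance Definition _ := GRing.isLinear.Build R[i] V V *:%R T T_lin.
HB.instance Definition _ := GRing.isLinear.Build R[i] V V *:%R T' T'_lin.
HB.instance Definition _ := GRing.isLinear.Build R[i] V V *:%R S S_lin.
HB.instance Definition _ := GRing.isLinear.Build R[i] V V *:%R S' S'_lin.
Hypotheses (hTT' : is_adjoint B T T') (hSS' : is_adjoint B S S').

Variables (a b W : R).
Hypothesis T_le : forall u, `[T u] <= a * `[u].
Hypothesis S_le : forall u, `[S u] <= b * `[u].
Hypothesis ST_le : forall u, normc (B (S (T u)) u) <= W * `[u] ^+ 2.

Lemma normc_TS_le y : 0 <= a -> normc (B (T (S y)) y) <= a * b * `[y] ^+ 2.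
Proof.
move=> a_ge0; apply: le_trans (CauchySchwarz_sip hB _ _) _.
rewrite expr2 mulrA ler_wpM2r ?snorm_ge0 //.
by apply: le_trans (T_le _) _; rewrite -mulrA ler_wpM2l ?S_le.
Qed.

Section Positive.
Hypotheses (a_gt0 : 0 < a) (b_gt0 : 0 < b).

Let hT'T := is_adjointC hB hTT'.
Let hS'S := is_adjointC hB hSS'.
Let T'_le := snorm_adjoint_le hB hTT' (ltW a_gt0) T_le.
Let S'_le := snorm_adjoint_le hB hSS' (ltW b_gt0) S_le.

Section Phase.
Variable c : R[i].
Hypothesis c_unit : normc c = 1.

Definition reTS y := Re (c * B (T (S y)) y).

Definition hermTS y := c *: T (S y) + conjc c *: S' (T' y).

Lemma normc_phase_sum u w : normc (c * u + conjc c * w) <= normc u + normc w.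
Proof.
by apply: le_trans (le_normcD _ _) _; rewrite !Normc.normcM normc_conj c_unit !mul1r.
Qed.

Lemma reTS_le_mul y : reTS y <= `[S y] * `[T' y].
Proof.
apply: le_trans (Re_le_normc _) _; rewrite Normc.normcM c_unit mul1r hTT'.
exact: CauchySchwarz_sip.
Qed.

Lemma norm_reTS_le y : `|reTS y| <= a * b * `[y] ^+ 2.
Proof.
apply: le_trans (norm_Re_le_normc _) _; rewrite Normc.normcM c_unit mul1r.
exact/normc_TS_le/ltW.
Qed.

Lemma reTSZ (r : R) y : reTS (r%:C%C *: y) = r ^+ 2 * reTS y.
Proof. by rewrite /reTS !linearZ /= (sip_scale2 hB) mulrCA ReRM. Qed.

Lemma hermTS_lin : linear hermTS.
Proof.
move=> k x y; rewrite /hermTS !linearP /= [k *: (c *: _)]scalerA.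
by rewrite [c *: (k *: _)]scalerA [c * k]mulrC addrACA.
Qed.

Lemma hermTS_sym : is_adjoint B hermTS hermTS.
Proof.
move=> u v; rewrite /hermTS (sipDl hB) !(sipZl hB) hTT' hSS' hS'S hT'T.
by rewrite (sipDr hB) !(sipZr hB) conjcK addrC.
Qed.

Lemma sip_hermTS_diag y : B (hermTS y) y = (2 * reTS y)%:C%C.
Proof.
rewrite /hermTS (sipDl hB) !(sipZl hB) hS'S hTT' (sipC hB (S y) (T' y)) -hTT'.
by rewrite -rmorphM /= addcJ rmorphM rmorph_nat.
Qed.

Lemma normc_S_hermTS_le y :
  normc (B (S (hermTS y)) (S y)) <= W * `[S y] ^+ 2 + b ^+ 2 * (`[S y] * `[T' y]).
Proof.
rewrite /hermTS linearD !linearZ (sipDl hB) !(sipZl hB).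
apply: le_trans (normc_phase_sum _ _) (lerD (ST_le _) _).
rewrite hSS'; apply: le_trans (CauchySchwarz_sip hB _ _) _.
apply: le_trans (ler_pM (snorm_ge0 B _) (snorm_ge0 B _) (S'_le _) (S'_le _)) _.
by rewrite mulrACA -expr2 [`[T' y] * _]mulrC.
Qed.

Lemma normc_T'_hermTS_le y :
  normc (B (T' (hermTS y)) (T' y)) <= a ^+ 2 * (`[S y] * `[T' y]) + W * `[T' y] ^+ 2.
Proof.
rewrite /hermTS linearD !linearZ (sipDl hB) !(sipZl hB).
apply: le_trans (normc_phase_sum _ _) (lerD _ _).
  rewrite hT'T; apply: le_trans (CauchySchwarz_sip hB _ _) _.
  apply: le_trans (ler_pM (snorm_ge0 B _) (snorm_ge0 B _) (T_le _) (T_le _)) _.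
  by rewrite mulrACA -expr2.
by rewrite hT'T hS'S (sipC hB (S (T (T' y)))) normc_conj ST_le.
Qed.

(* The weights realise the rescaling T -> tT, S -> S/t that turns the bound
   a^2 + b^2 into 2ab. *)
Definition wform u y := (a / b)%:C%C * B (S u) (S y) + (b / a)%:C%C * B (T' u) (T' y).

Definition wnorm2 y := a / b * `[S y] ^+ 2 + b / a * `[T' y] ^+ 2.

Lemma wform_diag y : wform y y = (wnorm2 y)%:C%C.
Proof. by rewrite /wform !(sip_diag hB) -!rmorphM -rmorphD. Qed.

Lemma wformBZl (r : R) u y : wform (r%:C%C *: y - u) y = (r * wnorm2 y)%:C%C - wform u y.
Proof.
rewrite [(r * _)%:C%C]rmorphM /= -wform_diag /wform !linearB !linearZ /=.
by rewrite !(sipBl hB) !(sipZl hB); ring.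
Qed.

Lemma Re_wform_le u y : Re (wform u y) <= `[u] * (a * `[S y] + b * `[T' y]).
Proof.
have weighted_le (k l : R) (U : V -> V) : 0 < k -> 0 < l -> (forall u, `[U u] <= l * `[u]) ->
    k / l * Re (B (U u) (U y)) <= `[u] * (k * `[U y]).
  move=> k_gt0 l_gt0 U_le.
  rewrite (_ : `[u] * _ = k / l * (l * `[u] * `[U y])); last by field; rewrite gt_eqF.
  apply: (ler_wpM2l (divr_ge0 (ltW k_gt0) (ltW l_gt0))).
  apply: le_trans (Re_le_normc _) (le_trans (CauchySchwarz_sip hB _ _) _).
  by apply: ler_wpM2r; [exact: snorm_ge0 | exact: U_le].
by rewrite ReD !ReRM mulrDr; apply: lerD; apply: weighted_le.
Qed.

Lemma Re_wform_hermTS_le y : Re (wform (hermTS y) y) <= (W + a * b) * wnorm2 y.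
Proof.
have ab_ge0 : 0 <= a / b by rewrite divr_ge0 ?ltW.
have ba_ge0 : 0 <= b / a by rewrite divr_ge0 ?ltW.
apply: le_trans (Re_le_normc _) _; apply: le_trans (le_normcD _ _) _.
rewrite !Normc.normcM !normc_real !ger0_norm //.
apply: le_trans (lerD (ler_wpM2l ab_ge0 (normc_S_hermTS_le y))
                      (ler_wpM2l ba_ge0 (normc_T'_hermTS_le y))) _.
have := mul2_le_weighted `[S y] `[T' y] a_gt0 b_gt0.
rewrite /wnorm2; set P := `[S y]; set Q := `[T' y]; set N := _ + _ => PQ_le.
rewrite -subr_ge0.
have -> : (W + a * b) * N - (a / b * (W * P ^+ 2 + b ^+ 2 * (P * Q))
    + b / a * (a ^+ 2 * (P * Q) + W * Q ^+ 2)) = a * b * (N - 2 * (P * Q)).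
  by rewrite /N; field; rewrite !gt_eqF.
by rewrite mulr_ge0 ?subr_ge0 // mulr_ge0 ?ltW.
Qed.

Lemma hermTS_defect_le (L : R) y : (L - (W + a * b)) * wnorm2 y <=
  `[L%:C%C *: y - hermTS y] * (a * `[S y] + b * `[T' y]).
Proof.
have := Re_wform_le (L%:C%C *: y - hermTS y) y.
rewrite wformBZl ReB /=; apply: le_trans.
by rewrite mulrBl lerD2l lerN2 Re_wform_hermTS_le.
Qed.

Lemma reTS_gap_le (L : R) : W + a * b <= L -> (forall y, 2 * reTS y <= L * `[y] ^+ 2) ->
  forall y, `[y] = 1 ->
  (L - (W + a * b)) ^+ 2 * (2 * reTS y) <= 2 * (a * b) * (L + 2 * (a * b)) * (L - 2 * reTS y).
Proof.
move=> gap reTS_le y y1; pose K u := L%:C%C *: u - hermTS u.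
have W_ge0 : 0 <= W.
  by have := ST_le y; rewrite y1 expr1n mulr1; apply: le_trans; exact: normc_ge0.
have ab_gt0 : 0 < a * b by rewrite mulr_gt0.
have K_lin : linear K.
  move=> k u w; rewrite /K hermTS_lin scalerDr !scalerA mulrC -scalerA.
  by rewrite opprD addrACA -scalerBr.
have K_sym : is_adjoint B K K.
  move=> u v; rewrite /K (sipBl hB) (sipBr hB) (sipZl hB) (sipZr hB) conjc_real.
  by rewrite hermTS_sym.
have K_diag u : B (K u) u = (L * `[u] ^+ 2 - 2 * reTS u)%:C%C.
  rewrite /K (sipBl hB) (sipZl hB) (sip_diag hB) sip_hermTS_diag.
  by rewrite rmorphB /= [(L * _)%:C%C]rmorphM.
have K_ge0 u : 0 <= B (K u) u by rewrite K_diag ler0c subr_ge0 reTS_le.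
have K_le u : Re (B (K u) u) <= (L + 2 * (a * b)) * `[u] ^+ 2.
  rewrite K_diag /=; have := norm_reTS_le u; rewrite ler_norml => /andP[+ _].
  by move: (reTS u) => r; lra.
have k_ge0 : 0 <= L + 2 * (a * b) by lra.
have Ky_le := sqr_snorm_le_positive hB K_lin K_sym K_ge0 k_ge0 K_le y.
rewrite K_diag /= y1 expr1n mulr1 in Ky_le.
have N_ge0 : 0 <= wnorm2 y by rewrite addr_ge0 // mulr_ge0 ?sqr_ge0 ?divr_ge0 ?ltW.
have g_ge0 : 0 <= L - (W + a * b) by rewrite subr_ge0.
have e_ge0 : 0 <= 2 * (a * b) by rewrite mulr_ge0 ?ltW.
have g2N_le := sqr_mul_le_of_le_mul g_ge0 N_ge0 (snorm_ge0 B (K y)) e_ge0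
  (hermTS_defect_le L y) (sqr_le_weighted `[S y] `[T' y] a_gt0 b_gt0).
have reTS_le_N : 2 * reTS y <= wnorm2 y.
  by apply: le_trans (ler_wpM2l _ (reTS_le_mul y)) (mul2_le_weighted _ _ a_gt0 b_gt0).
apply: le_trans (ler_wpM2l (sqr_ge0 _) reTS_le_N) _; apply: le_trans g2N_le _.
by rewrite -mulrA ler_wpM2l.
Qed.

End Phase.

Lemma reTS_le_half c : normc c = 1 -> forall x, `[x] = 1 -> reTS c x <= (W + a * b) / 2.
Proof.
move=> c1 x x1; set U := [set y | `[y] = 1]%classic.
set lam := sup [set reTS c y | y in U]%classic.
have reTS_unit_le y : U y -> reTS c y <= a * b.
  move=> y1; have := norm_reTS_le c1 y; rewrite y1 expr1n mulr1.
  exact: le_trans (ler_norm _).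
have [lam_le|lam_gt] := lerP lam ((W + a * b) / 2).
  exact: le_trans (le_sup_image reTS_unit_le x1) lam_le.
have W_ge0 : 0 <= W.
  by have := ST_le x; rewrite x1 expr1n mulr1; apply: le_trans; exact: normc_ge0.
have ab_gt0 : 0 < a * b by rewrite mulr_gt0.
have lam_gt0 : 0 < lam.
  by apply: le_lt_trans lam_gt; rewrite divr_ge0 ?addr_ge0 ?(ltW ab_gt0).
have reTS_le y : 2 * reTS c y <= 2 * lam * `[y] ^+ 2.
  rewrite -mulrA ler_pM2l //.
  apply: (homogeneous_le hB (g := reTS c)) => // [r u _|u u0|u u1]; first exact: reTSZ.
    by have := norm_reTS_le c1 u; rewrite u0 expr0n mulr0; apply: le_trans (ler_norm _).
  by rewrite /lam; apply: (le_sup_image reTS_unit_le).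
have gap : W + a * b < 2 * lam by rewrite [2 * lam]mulrC -ltr_pdivrMr.
have reTS_gap := reTS_gap_le c1 (ltW gap) reTS_le.
set G := (2 * lam - (W + a * b)) ^+ 2 in reTS_gap.
set E := 2 * (a * b) * (2 * lam + 2 * (a * b)) in reTS_gap.
have G_gt0 : 0 < G by rewrite exprn_gt0 // subr_gt0.
have E_gt0 : 0 < E by rewrite !mulr_gt0 // addr_gt0 ?mulr_gt0.
(* reTS_gap_le bounds reTS on the unit sphere by a number < lam. *)
have : lam <= E * lam / (G + E).
  apply: sup_image_le => [|y y1].
    by apply: divr_ge0; [apply: mulr_ge0 | apply: addr_ge0]; apply: ltW.
  rewrite ler_pdivlMr ?addr_gt0 //; have := reTS_gap y y1.
  by move: (reTS c y) => r; nra.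
by rewrite ler_pdivlMr ?addr_gt0 // mulrDr [E * _]mulrC gerDr leNgt mulr_gt0.
Qed.

End Positive.

Lemma normc_TS_le_half x : `[x] = 1 -> normc (B (T (S x)) x) <= (W + a * b) / 2.
Proof.
move=> x1.
have a_ge0 : 0 <= a by have := T_le x; rewrite x1 mulr1; exact: le_trans (snorm_ge0 B _).
have b_ge0 : 0 <= b by have := S_le x; rewrite x1 mulr1; exact: le_trans (snorm_ge0 B _).
have W_ge0 : 0 <= W by have := ST_le x; rewrite x1 expr1n mulr1; exact: le_trans (normc_ge0 _).
have [ab0|ab_neq0] := eqVneq (a * b) 0.
  have := normc_TS_le x a_ge0; rewrite ab0 mul0r addr0 => /le_trans; apply.
  by rewrite divr_ge0.
have a_gt0 : 0 < a by rewrite lt_def a_ge0 andbT; apply: contraNneq ab_neq0 => ->; rewrite mul0r.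
have b_gt0 : 0 < b by rewrite lt_def b_ge0 andbT; apply: contraNneq ab_neq0 => ->; rewrite mulr0.
have [c c1 cw] := phase_exists (B (T (S x)) x).
by have := reTS_le_half a_gt0 b_gt0 c1 x1; rewrite /reTS cw.
Qed.

End ProductNumericalRadius.

Section NumericalRadius.
Variables (R : realType) (V : lmodType R[i]) (B : V -> V -> R[i]).
Local Notation "`[ x ]" := (snorm B x) (format "`[ x ]").

(* For B = ipA ip A these are opnormA and numradA. *)
Definition opsnorm (U : V -> V) : R := sup [set `[U x] | x in [set x | `[x] = 1]]%classic.

Definition numrad (U : V -> V) : R :=
  sup [set normc (B (U x) x) | x in [set x | `[x] = 1]]%classic.

Hypothesis hB : is_semi_inner_product B.

Section BoundedOperator.
Variables (U : V -> V) (k : R).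
Hypotheses (U_lin : linear U) (U_le : forall u, `[U u] <= k * `[u]).
HB.instance Definition _ := GRing.isLinear.Build R[i] V V *:%R U U_lin.

Lemma snorm_le_opsnorm u : `[U u] <= opsnorm U * `[u].
Proof.
rewrite -[`[u]]expr1; apply: (homogeneous_le hB (g := fun u => `[U u])) => //.
- by move=> r v r_gt0; rewrite linearZ snormZ // gtr0_norm.
- by move=> v v0; have := U_le v; rewrite v0 mulr0.
- apply: (le_sup_image (M := k)) => y y1.
  by have := U_le y; rewrite y1 mulr1.
Qed.

Lemma normc_le_numrad u : normc (B (U u) u) <= numrad U * `[u] ^+ 2.
Proof.
apply: (homogeneous_le hB (g := fun u => normc (B (U u) u))) => //.
- move=> r v r_gt0 /=; rewrite linearZ (sip_scale2 hB) Normc.normcM normc_real.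
  by rewrite ger0_norm ?sqr_ge0.
- by move=> v v0; apply: le_trans (CauchySchwarz_sip hB _ _) _; rewrite v0 mulr0.
- apply: (le_sup_image (M := k)) => y y1.
  by apply: le_trans (CauchySchwarz_sip hB _ _) _; rewrite y1 mulr1 -[k]mulr1 -y1.
Qed.

End BoundedOperator.

Lemma numrad_comp_le (T T' S S' : V -> V) :
  linear T -> linear T' -> linear S -> linear S' ->
  is_adjoint B T T' -> is_adjoint B S S' ->
  (exists k, forall u, `[T u] <= k * `[u]) -> (exists k, forall u, `[S u] <= k * `[u]) ->
  numrad (T \o S) <= (numrad (S \o T) + opsnorm T * opsnorm S) / 2.
Proof.
move=> T_lin T'_lin S_lin S'_lin hTT' hSS' [kT T_le] [kS S_le].
have ST_lin : linear (S \o T) by move=> r x y; rewrite /= T_lin S_lin.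
have ST_le u : `[S (T u)] <= `|kS| * `|kT| * `[u].
  rewrite -mulrA; apply: le_trans (snorm_bound_abs S_le _) _.
  by apply: (ler_wpM2l (normr_ge0 _)); exact: snorm_bound_abs.
have numrad_ge0 U : 0 <= numrad U by apply: sup_image_ge0 => y _; exact: normc_ge0.
have opsnorm_ge0 U : 0 <= opsnorm U by apply: sup_image_ge0 => y _; exact: snorm_ge0.
apply: sup_image_le => [|x x1]; first by rewrite divr_ge0 ?addr_ge0 ?mulr_ge0.
exact: (normc_TS_le_half hB T_lin T'_lin S_lin S'_lin hTT' hSS'
  (snorm_le_opsnorm T_lin T_le) (snorm_le_opsnorm S_lin S_le)
  (normc_le_numrad ST_lin ST_le) x1).
Qed.

End NumericalRadius.

Section WeightedInnerProduct.
Variables (R : realType) (V : lmodType R[i]) (ip : V -> V -> R[i]) (A : V -> V).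
Hypotheses (hip : is_inner_product ip) (A_pos : positive_op ip A).

Lemma inner_product_semi : is_semi_inner_product ip.
Proof. by case: hip. Qed.
Let hI := inner_product_semi.

Let A_lin : linear A. Proof. by case: A_pos => [[]]. Qed.
HB.instance Definition _ := GRing.isLinear.Build R[i] V V *:%R A A_lin.

Lemma ipA_herm x y : ipA ip A y x = conjc (ipA ip A x y).
Proof.
(* Polarisation: <A(x + y), x + y> and <A(x + iy), x + iy> are real. *)
have [_ A_ge0] := A_pos.
have e1 := ger0_Im (A_ge0 (x + y)).
have e2 := ger0_Im (A_ge0 (x + 'i%C *: y)).
rewrite linearD (sipDl hI) !(sipDr hI) in e1.
rewrite linearD linearZ (sipDl hI) !(sipDr hI) !(sipZl hI) !(sipZr hI) in e2.
have ex := ger0_Im (A_ge0 x); have ey := ger0_Im (A_ge0 y).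
rewrite /ipA; move: e1 e2 ex ey.
move: (ip (A x) x) (ip (A x) y) (ip (A y) x) (ip (A y) y).
move=> [p1 p2] [u1 u2] [w1 w2] [q1 q2] /= e1 e2 ex ey; apply/eqP; rewrite eq_complex /=; apply/andP; split; apply/eqP; lra.
Qed.

Lemma ipA_semi_inner_product : is_semi_inner_product (ipA ip A).
Proof.
split=> [a x y z|x y|x]; last exact: A_pos.2.
  by rewrite /ipA linearP /=; case: hip.
exact: ipA_herm.
Qed.

Lemma normA_le_hnorm : exists2 K, 0 <= K & forall y, normA ip A y <= K * hnorm ip y.
Proof.
have [[_ [MA A_le]] _] := A_pos; exists (Num.sqrt `|MA|) => [|y]; first exact: sqrtr_ge0.
have sqr_le : normA ip A y ^+ 2 <= `|MA| * hnorm ip y ^+ 2.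
  rewrite (sqr_snorm ipA_semi_inner_product); apply: le_trans (Re_le_normc _) _.
  apply: le_trans (CauchySchwarz_sip hI _ _) _; rewrite expr2 mulrA.
  by apply: ler_wpM2r; [exact: snorm_ge0 | exact: snorm_bound_abs].
rewrite -(@ler_pXn2r _ 2) ?nnegrE ?mulr_ge0 ?sqrtr_ge0 ?snorm_ge0 //.
by rewrite exprMn (sqr_sqrtr (normr_ge0 MA)).
Qed.

Lemma BA_normA_bounded T : BA ip A T -> exists k, forall x, normA ip A (T x) <= k * normA ip A x.
Proof.
move=> [[T_lin [M T_le]] [T' [[_ [M' T'_le]] hTT']]].
have {}T_le := snorm_bound_abs T_le; have {}T'_le := snorm_bound_abs T'_le.
have [K K_ge0 normA_le] := normA_le_hnorm.
exists (Num.sqrt (`|M'| * `|M|)).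
apply: (snorm_le_of_orbit_growth ipA_semi_inner_product T_lin hTT') => [|x].
  by rewrite mulr_ge0.
exists (K * hnorm ip x) => k; apply: le_trans (normA_le _) _.
rewrite -mulrA; apply: (ler_wpM2l K_ge0); rewrite mulrC.
apply: iter_le_expr => [|u]; first by rewrite mulr_ge0.
apply: le_trans (T'_le _) _; rewrite -mulrA.
by apply: (ler_wpM2l (normr_ge0 _)); exact: T_le.
Qed.

End WeightedInnerProduct.

Theorem corollary2p8 (R : realType) (V : lmodType R[i]) (ip : V -> V -> R[i])
  (A T S : V -> V) :
  is_hilbert ip ->
  positive_op ip A -> nonzero_op A ->
  BA ip A T -> BA ip A S ->
  numradA ip A (T \o S)
    <= (numradA ip A (S \o T) + opnormA ip A T * opnormA ip A S) / 2.
Proof.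
move=> [hip _] A_pos _ hT hS.
have hB := ipA_semi_inner_product hip A_pos.
case: (hT) => [[T_lin _] [T' [[T'_lin _] hTT']]].
case: (hS) => [[S_lin _] [S' [[S'_lin _] hSS']]].
exact: (numrad_comp_le hB T_lin T'_lin S_lin S'_lin hTT' hSS'
  (BA_normA_bounded hip A_pos hT) (BA_normA_bounded hip A_pos hS)).
Qed.
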